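(* For every set of formulas $\Gamma$ and formula $\alpha$: $\circ^{*}(Var(\Gamma\cup\{\alpha\})),\Gamma\vdash_{LFI3}\alpha$ if and only if $\Gamma\vdash_{CPL}\alpha$, where $\circ^{*}(X)=\{\circ^{*}p: p\in X\}$.
   Context: Formulas are built from a countable set of propositional variables using unary $\neg,\circ$ and binary $\land,\lor,\to$. Define $\circ^*\alpha:=(\alpha\land\circ\alpha\land\circ\circ\alpha)\lor(\neg\alpha\land\circ\alpha\land\circ\circ\alpha)$. $Var(\Delta)$ is the set of propositional variables occurring in $\Delta$. On $\{0,1\}$ use Boolean $\land,\lor,\to,\sim$. Let $\mathbb{B}=\{x\in\{0,1\}^3: x_1\lor x_2=1,\ x_3\lor\sim(x_1\land x_2)=1\}$, with $T=(1,0,0)$ and $F=(0,1,0)$. The LFI3 algebra on $\mathbb{B}$: $a\dot\land b=(a_1\land b_1,\ a_2\lor b_2,\ (\sim a_2\land b_3)\lor(a_3\land\sim b_2)\lor(a_3\land b_3))$; $a\dot\lor b=(a_1\lor b_1,\ a_2\land b_2,\ (\sim a_1\land b_3)\lor(a_3\land\sim b_1)\lor(a_3\land b_3))$; $a\dot\to b=(a_1\to b_1,\ b_2\land(\sim a_2\lor a_3),\ (\sim a_2\land b_3)\lor(\sim a_2\land a_3\land\sim b_1)\lor(a_3\land b_3)\lor(\sim a_1\land a_3\land\sim b_1))$; $\dot\neg a=(a_2,a_1,a_3)$; $\dot\circ a=(\sim(a_1\land a_2),a_3,a_3\land\sim(a_1\land a_2))$; designated set $\{x:x_1=1\}$. CPL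 is the matrix logic of the two-element subalgebra $\{T,F\}$ with designated set $\{T\}$ (usual two-valued tables, $\circ\alpha$ always true). For matrix logics, $\Gamma\vdash\alpha$ iff every homomorphic valuation designating all of $\Gamma$ designates $\alpha$. *)

From Stdlib Require Import Bool.

Inductive form : Type :=
| Var  : nat -> form
| Neg  : form -> form
| Circ : form -> form
| And  : form -> form -> form
| Or   : form -> form -> form
| Imp  : form -> form -> form.

Record tv : Type := TV { c1 : bool; c2 : bool; c3 : bool }.

Definition impb (a b : bool) : bool := negb a || b.

(* Membership in the carrier B of the LFI3 algebra. *)
Definition inB (x : tv) : bool :=
  (c1 x || c2 x) && (c3 x || negb (c1 x && c2 x)).

Definition T3 : tv := TV true false false.
Definition F3 : tv := TV false true false.

Definition andT (a b : tv) : tv :=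
  TV (c1 a && c1 b) (c2 a || c2 b)
     ((negb (c2 a) && c3 b) || (c3 a && negb (c2 b)) || (c3 a && c3 b)).

Definition orT (a b : tv) : tv :=
  TV (c1 a || c1 b) (c2 a && c2 b)
     ((negb (c1 a) && c3 b) || (c3 a && negb (c1 b)) || (c3 a && c3 b)).

Definition impT (a b : tv) : tv :=
  TV (impb (c1 a) (c1 b)) (c2 b && (negb (c2 a) || c3 a))
     ((negb (c2 a) && c3 b) || (negb (c2 a) && c3 a && negb (c1 b))
      || (c3 a && c3 b) || (negb (c1 a) && c3 a && negb (c1 b))).

Definition negT (a : tv) : tv := TV (c2 a) (c1 a) (c3 a).

Definition circT (a : tv) : tv :=
  TV (negb (c1 a && c2 a)) (c3 a) (c3 a && negb (c1 a && c2 a)).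

Fixpoint eval (v : nat -> tv) (f : form) : tv :=
  match f with
  | Var n => v n
  | Neg a => negT (eval v a)
  | Circ a => circT (eval v a)
  | And a b => andT (eval v a) (eval v b)
  | Or a b => orT (eval v a) (eval v b)
  | Imp a b => impT (eval v a) (eval v b)
  end.

Definition LFI3_cons (G : form -> Prop) (a : form) : Prop :=
  forall v : nat -> tv,
    (forall n, inB (v n) = true) ->
    (forall g, G g -> c1 (eval v g) = true) ->
    c1 (eval v a) = true.

(* CPL: matrix of the subalgebra {T,F}, designated set {T}. *)
Definition CPL_cons (G : form -> Prop) (a : form) : Prop :=
  forall v : nat -> tv,
    (forall n, v n = T3 \/ v n = F3) ->
    (forall g, G g -> eval v g = T3) ->
    eval v a = T3.

Definition circstar (a : form) : form :=
  Or (And (And a (Circ a)) (Circ (Circ a)))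
     (And (And (Neg a) (Circ a)) (Circ (Circ a))).

Fixpoint occurs (n : nat) (f : form) : Prop :=
  match f with
  | Var m => n = m
  | Neg a | Circ a => occurs n a
  | And a b | Or a b | Imp a b => occurs n a \/ occurs n b
  end.

Definition VarsOf (G : form -> Prop) (a : form) (n : nat) : Prop :=
  (exists g, G g /\ occurs n g) \/ occurs n a.

Definition with_circstar (X : nat -> Prop) (G : form -> Prop) (f : form) : Prop :=
  (exists n, X n /\ f = circstar (Var n)) \/ G f.

(* The formula circ^* p is designated exactly when p takes one of the classical
   values T, F.  So the premises circ^*(Var(G ∪ {a})) force every variable that
   matters to be classical, and since {T, F} is a subalgebra on which
   designation means being T, LFI3 then behaves like CPL.  Conversely, a
   classical valuation designates every circ^* p, and values of variables
   outside G ∪ {a} can be reset to T without changing anything. *)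

From Stdlib Require Import Bool.

Definition classical (x : tv) : Prop := x = T3 \/ x = F3.

Lemma classical_dec (x : tv) : {classical x} + {~ classical x}.
Proof.
  unfold classical, T3, F3.
  destruct x as [[] [] []];
    solve [left; auto | right; intros [E | E]; discriminate E].
Qed.

Lemma classical_inB (x : tv) : classical x -> inB x = true.
Proof. intros [-> | ->]; reflexivity. Qed.

Lemma classical_designated (x : tv) : classical x -> c1 x = true -> x = T3.
Proof. intros [-> | ->]; [reflexivity | discriminate]. Qed.

Lemma eval_classical (v : nat -> tv) (f : form) :
  (forall n, classical (v n)) -> classical (eval v f).
Proof.
  intro Hv; unfold classical in *.
  induction f; simpl; auto;
    repeat match goal with H : _ \/ _ |- _ => destruct H as [-> | ->] end;
    auto.
Qed.

Lemma eval_agree (v w : nat -> tv) (f : form) :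
  (forall n, occurs n f -> v n = w n) -> eval v f = eval w f.
Proof.
  induction f; simpl; intro Hvw;
    try rewrite IHf; try rewrite IHf1; try rewrite IHf2; auto.
Qed.

Lemma designated_circstar_var (v : nat -> tv) (n : nat) :
  inB (v n) = true ->
  (c1 (eval v (circstar (Var n))) = true <-> classical (v n)).
Proof.
  unfold classical, T3, F3; simpl.
  destruct (v n) as [[] [] []]; simpl; intuition discriminate.
Qed.

Definition classicize (v : nat -> tv) (n : nat) : tv :=
  if classical_dec (v n) then v n else T3.

Lemma classicize_classical (v : nat -> tv) (n : nat) : classical (classicize v n).
Proof.
  unfold classicize; destruct (classical_dec (v n)); [assumption | now left].
Qed.

Lemma classicize_eq (v : nat -> tv) (n : nat) :
  classical (v n) -> classicize v n = v n.
Proof.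
  intro Hc; unfold classicize.
  destruct (classical_dec (v n)); [reflexivity | contradiction].
Qed.

Lemma CPL_of_LFI3_circstar (X : nat -> Prop) (G : form -> Prop) (a : form) :
  LFI3_cons (with_circstar X G) a -> CPL_cons G a.
Proof.
  intros Hlfi v Hv HG.
  apply classical_designated; [apply eval_classical, Hv|].
  apply Hlfi.
  - intro n; apply classical_inB, Hv.
  - intros g [[n [_ ->]] | Hg].
    + apply designated_circstar_var; [apply classical_inB|]; apply Hv.
    + now rewrite HG.
Qed.

Lemma LFI3_circstar_of_CPL (G : form -> Prop) (a : form) :
  CPL_cons G a -> LFI3_cons (with_circstar (VarsOf G a) G) a.
Proof.
  intros Hcpl v HB Hdes.
  assert (Hrel : forall n, VarsOf G a n -> classicize v n = v n).
  { intros n Hn; apply classicize_eq.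
    apply designated_circstar_var; [apply HB|].
    apply Hdes; left; eauto. }
  rewrite <- (eval_agree (classicize v)) by (intros; apply Hrel; right; auto).
  rewrite (Hcpl (classicize v)); [reflexivity | apply classicize_classical |].
  intros g Hg.
  apply classical_designated; [apply eval_classical, classicize_classical|].
  rewrite (eval_agree _ v) by (intros; apply Hrel; left; eauto).
  apply Hdes; now right.
Qed.

Theorem theorem21 (G : form -> Prop) (a : form) :
  LFI3_cons (with_circstar (VarsOf G a) G) a <-> CPL_cons G a.
Proof.
  split.
  - apply CPL_of_LFI3_circstar.
  - apply LFI3_circstar_of_CPL.
Qed.
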